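(* For all integers $n,f,k$ with $1\le k\le f\le n-1$, the task $k\text{-TAg}(n,f)$ is not $C$-reducible to $\mathrm{Cons}(n,n-1)$, and hence is not $C$-reducible to $\mathrm{Cons}(n,f)$.
   Context: Model: a finite set of processes runs an asynchronous algorithm communicating by reliable message passing with unbounded delays and speeds; processes fail only by crashing. Time is $\mathcal T=\mathbb N$; a failure pattern $F$ for $\Pi$ is a nondecreasing map $\mathcal T\to2^\Pi$, $Faulty(F)=\bigcup_tF(t)$. A binary agreement problem $P$ for $\Pi$ maps each $(F,\vec V)$, $\vec V\in\{0,1\}^\Pi$, to a nonempty $P(F,\vec V)\subseteq\{0,1\}$; a task is $T=(P,f)$. An algorithm solves $T$ if in every run with $|Faulty(F)|\le f$ and initial values $\vec V$: every correct process eventually decides, decisions are irrevocable, no two processes decide differently, and decisions lie in $P(F,\vec V)$. $k\text{-TAg}_\Pi(F,\vec V)=\{0\}$ if at least $k$ entries of $\vec V$ are $0$; $=\{1\}$ if $\vec V$ is all-ones and $|Faulty(F)|\le k-1$; $=\{0,1\}$ otherwise; $k\text{-TAg}(\Pi,f)=(k\text{-TAg}_\Pi,f)$; $k\text{-TAg}(n,f)$ and $\mathrm{Cons}(n,f)=n\text{-TAg}(n,f)$ are the versions for $\Pi=\{1,\dots,n\}$ ($\mathrm{Cons}(n,n-1)$ is wait-free binary Consensus). Oracles: for $T=(P,f)$ on $\Pi$, $\mathcal O.T$ is a black box with consultants $\Pi$; its history is a sequence of successive consultations, in each of which every consultant may submit at most one query in $\{0,1\}$ and the oracle returns a common response $d$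 with $d\in P(F,\vec V)$ for every $\vec V$ extending the partial query vector (the oracle may use the whole failure pattern, including future crashes), and every correct querier gets the response whenever at least $|\Pi|-f$ consultants query; $\mathcal O.T$ is the most general such oracle. $T_1\le_C T_2$ means there is an algorithm solving $T_1$ whose processes, besides message passing, may consult (repeatedly, waiting for each answer) the single oracle $\mathcal O.T_2$ (for a renamed copy of $T_2$ on the relevant processes). *)

From mathcomp Require Import all_boot.
From mathcomp Require Import boolp.

Set Implicit Arguments.
Unset Strict Implicit.
Unset Printing Implicit Defensive.

Definition failure_pattern (n : nat) := nat -> {set 'I_n}.

Definition fp_ok n (F : failure_pattern n) : Prop :=
  forall t t', t <= t' -> F t \subset F t'.

Definition faulty n (F : failure_pattern n) : {set 'I_n} :=
  [set p | `[< exists t, p \in F t >] ].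

Definition correct n (F : failure_pattern n) (p : 'I_n) : bool :=
  p \notin faulty F.

(* A binary agreement problem: [P F V d] means d \in P(F, V). *)
Definition problem (n : nat) :=
  failure_pattern n -> ('I_n -> bool) -> bool -> Prop.

Definition task (n : nat) := (problem n * nat)%type.

(* k-TAg_Pi (false = 0, true = 1). *)
Definition kTAg (n k : nat) : problem n := fun F V d =>
  if k <= #|[set p | ~~ V p]| then d = false
  else if [forall p, V p] && (#|faulty F| <= k - 1) then d = true
  else True.
Arguments kTAg : clear implicits.

Definition kTAg_task (n f k : nat) : task n := (kTAg n k, f).
Arguments kTAg_task : clear implicits.
Definition ConsT (n f : nat) : task n := kTAg_task n f n.
Arguments ConsT : clear implicits.

Inductive Input (n : nat) (M : Type) :=
| InNone
| InMsg (q : 'I_n) (m : M)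
| InResp (d : bool).

(* A step
   returns the new state, the messages sent (destination, content), and
   possibly a query (in {0,1}) submitted to the oracle.  [a_dec] reads the
   decision (if any) off the local state. *)
Record Algo (n : nat) := {
  St : Type;
  Msg : Type;
  a_init : 'I_n -> bool -> St;
  a_step : 'I_n -> St -> Input n Msg -> St * seq ('I_n * Msg) * option bool;
  a_dec : 'I_n -> St -> option bool
}.
Arguments St {n} a.
Arguments Msg {n} a.
Arguments a_init {n} a.
Arguments a_step {n} a.
Arguments a_dec {n} a.

(* Scheduled events: a null step, the receipt of the i-th message sent at
   time s (by q, with content m), or the receipt of the oracle response. *)
Inductive Event (n : nat) (M : Type) :=
| EvNone
| EvMsg (s i : nat) (q : 'I_n) (m : M)
| EvResp.

(* A run: at each time at most one process takes a step; [resp c] is the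
   common response of the oracle in its c-th consultation. *)
Record Run n (A : Algo n) := {
  sched : nat -> option ('I_n * Event n (Msg A));
  resp : nat -> bool
}.
Arguments sched {n A} r.
Arguments resp {n A} r.

Section Semantics.
Context (n : nat) (A : Algo n) (V : 'I_n -> bool) (R : Run A).

(* Global configuration: local states, number of queries submitted so far,
   and whether a query is pending (the process waits for its answer). *)
Record Cfg := {
  cst : 'I_n -> St A;
  cnq : 'I_n -> nat;
  cpend : 'I_n -> bool
}.

Definition input_of (c : Cfg) (p : 'I_n) (ev : Event n (Msg A)) : Input n (Msg A) :=
  match ev with
  | EvNone => InNone _ _
  | EvMsg _ _ q m => InMsg q m
  | EvResp => InResp _ _ (resp R (cnq c p).-1)
  end.

Fixpoint cfg (t : nat) : Cfg :=
  match t with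
  | 0 => {| cst := fun p => a_init A p (V p);
            cnq := fun _ => 0;
            cpend := fun _ => false |}
  | t'.+1 =>
    let c := cfg t' in
    match sched R t' with
    | None => c
    | Some (p, ev) =>
      let: (s', _, oq) := a_step A p (cst c p) (input_of c p ev) in
      let pend0 := match ev with EvResp => false | _ => cpend c p end in
      {| cst := fun q => if q == p then s' else cst c q;
         cnq := fun q => if (q == p) && isSome oq then (cnq c q).+1 else cnq c q;
         cpend := fun q => if q == p then pend0 || isSome oq else cpend c q |}
    end
  end.

Definition out (t : nat) : option ('I_n * (seq ('I_n * Msg A) * option bool)) :=
  match sched R t with
  | None => None
  | Some (p, ev) =>
    let c := cfg t in
    let: (_, ms, oq) := a_step A p (cst c p) (input_of c p ev) in
    Some (p, (ms, oq))
  end.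

(* The j-th query of a process belongs to the j-th consultation of the oracle
   (consultation indices start at 0). *)
Definition Queried (c : nat) (p : 'I_n) (b : bool) : Prop :=
  exists t ms, out t = Some (p, (ms, Some b)) /\ cnq (cfg t) p = c.

Definition GetsResp (c : nat) (p : 'I_n) (t : nat) : Prop :=
  sched R t = Some (p, @EvResp n (Msg A)) /\ cnq (cfg t) p = c.+1.

Definition dec_at (t : nat) (p : 'I_n) : option bool := a_dec A p (cst (cfg t) p).

(* Admissible runs of A with failure pattern F, consulting the most general
   oracle O.(PO, fO). *)
Definition Admissible (F : failure_pattern n) (PO : problem n) (fO : nat) : Prop :=
  (forall t p ev, sched R t = Some (p, ev) -> p \notin F t) /\
  (* a process with a pending query waits for its answer; the answer is only
     delivered to a process with a pending query *)
  (forall t p ev, sched R t = Some (p, ev) ->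
      cpend (cfg t) p = (if ev is EvResp then true else false)) /\
  (forall t p s i q m, sched R t = Some (p, EvMsg s i q m) ->
      s < t /\ exists ms oq, out s = Some (q, (ms, oq)) /\ onth ms i = Some (p, m)) /\
  (forall t t' p p' s i q q' m m',
      sched R t = Some (p, EvMsg s i q m) ->
      sched R t' = Some (p', EvMsg s i q' m') -> t = t') /\
  (* safety of the oracle: the common response d of a consultation satisfies
     d \in PO(F, W) for every W extending the partial query vector *)
  (forall c, (exists p t, GetsResp c p t) ->
      forall W : 'I_n -> bool, (forall p b, Queried c p b -> W p = b) ->
      PO F W (resp R c)) /\
  (forall p, correct F p -> forall t, ~~ cpend (cfg t) p ->
      exists t' ev, t <= t' /\ sched R t' = Some (p, ev)) /\
  (forall s q ms oq i p m, out s = Some (q, (ms, oq)) -> onth ms i = Some (p, m) ->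
      correct F p ->
      (exists t, sched R t = Some (p, EvMsg s i q m)) \/
      (exists t0, forall t, t0 <= t -> cpend (cfg t) p)) /\
  (forall c, n - fO <= #|[set p | `[< exists b, Queried c p b >] ]| ->
      forall p, correct F p -> (exists b, Queried c p b) ->
      exists t, GetsResp c p t).

End Semantics.

Definition Solves n (A : Algo n) (T T' : task n) : Prop :=
  forall F : failure_pattern n, fp_ok F -> #|faulty F| <= T.2 ->
  forall (V : 'I_n -> bool) (R : Run A), Admissible V R F T'.1 T'.2 ->
    (forall p, correct F p -> exists t d, dec_at V R t p = Some d) /\
    (forall p t t' d, t <= t' -> dec_at V R t p = Some d -> dec_at V R t' p = Some d) /\
    (forall p q t t' d d', dec_at V R t p = Some d -> dec_at V R t' q = Some d' -> d = d') /\
    (forall p t d, dec_at V R t p = Some d -> T.1 F V d).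

Definition Creducible n (T1 T2 : task n) : Prop :=
  exists A : Algo n, Solves A T1 T2.

(* A wait-free consensus oracle may answer every consultation with the first
   query submitted to it.  Fix a set S of k processes and a round-robin
   scheduler that delivers every message fairly but lets no process of S step
   before a release time.  If S starts with 0s and crashes at once (k <= f
   failures), the processes outside S see a fair run and, k inputs being 0,
   must decide 0, say by time t.  If instead all inputs are 1, nobody crashes
   and S is released at t, the processes outside S cannot tell the difference
   before t: S neither stepped nor sent anything, and the oracle heard only
   their queries.  So 0 is decided in a run where k-TAg demands 1. *)

From mathcomp Require Import all_boot boolp zify.

Set Implicit Arguments.
Unset Strict Implicit.
Unset Printing Implicit Defensive.

Lemma count_lt_sub (T : eqType) (a b : pred T) (s : seq T) x :
  subpred a b -> x \in s -> b x -> ~~ a x -> count a s < count b s.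
Proof.
move=> sub_ab; elim: s => [//|y s IH]; rewrite inE => /orP[/eqP<-|s_x] bx nax /=.
  by rewrite bx (negbTE nax) ltnS; exact: sub_count.
have := IH s_x bx nax; case ay: (a y); first by rewrite (sub_ab y ay) ltn_add2l.
by move=> lt_ab; rewrite add0n (leq_trans lt_ab) ?leq_addl.
Qed.

Lemma cons_valid_input n F (W : 'I_n -> bool) q : kTAg n n F W (W q).
Proof.
rewrite /kTAg; case: ifP => [all_zero|_]; last by case: ifP => // /andP[/forallP ->].
have : [set p | ~~ W p] = setT by apply/eqP; rewrite eqEcard subsetT cardsT card_ord.
by move/setP/(_ q); rewrite !inE => /negbTE.
Qed.

Section SilencingScheduler.
Variables (n : nat) (A : Algo n) (V : 'I_n -> bool) (S : {set 'I_n})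
  (release : option nat) (n_gt0 : 0 < n).

Notation M := (Msg A).

Definition step_output := option ('I_n * (seq ('I_n * M) * option bool)).

(* Message (s, i) is the i-th message sent at time s.  The oracle answers each
   consultation with the first query submitted to it, recorded in [sim_answer]. *)
Record sim_state := {
  sim_cfg : Cfg A;
  sim_log : nat -> step_output;
  sim_delivered : nat -> nat -> bool;
  sim_answer : nat -> option bool }.

Definition sent (lg : nat -> step_output) s : seq ('I_n * M) :=
  if lg s is Some (_, (ms, _)) then ms else [::].

Definition msg_keys (lg : nat -> step_output) t : seq (nat * nat) :=
  flatten [seq [seq (s, i) | i <- iota 0 (size (sent lg s))] | s <- iota 0 t].

Definition msg_dest (lg : nat -> step_output) (key : nat * nat) : option 'I_n :=
  if onth (sent lg key.1) key.2 is Some (p, _) then Some p else None.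

Definition deliverable lg (dl : nat -> nat -> bool) (p : 'I_n) (key : nat * nat) :=
  (msg_dest lg key == Some p) && ~~ dl key.1 key.2.

Definition delivery (lg : nat -> step_output) (key : nat * nat) : Event n M :=
  if lg key.1 is Some (q, (ms, _)) then
    if onth ms key.2 is Some (_, m) then EvMsg key.1 key.2 q m else EvNone _ _
  else EvNone _ _.

Definition rr_proc t : 'I_n := Ordinal (ltn_pmod t n_gt0).

Definition awake t (p : 'I_n) :=
  (p \notin S) || (if release is Some T then T <= t else false).

Definition steps t p := (rr_proc t == p) && awake t p.

Definition next_event (pend : 'I_n -> bool) lg dl t (p : 'I_n) : Event n M :=
  if pend p then EvResp _ _
  else let keys := msg_keys lg t in
       if has (deliverable lg dl p) keys
       then delivery lg (nth (0, 0) keys (find (deliverable lg dl p) keys))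
       else EvNone _ _.

Definition next_step t (σ : sim_state) : option ('I_n * Event n M) :=
  if awake t (rr_proc t) then
    Some (rr_proc t, next_event (cpend (sim_cfg σ)) (sim_log σ) (sim_delivered σ) t (rr_proc t))
  else None.

(* Only the [resp] field matters: [input_of] reads nothing else. *)
Definition answer_run (σ : sim_state) : Run A :=
  {| sched := fun _ => None; resp := fun c => odflt false (sim_answer σ c) |}.

Definition sim_step t (σ : sim_state) : sim_state :=
  match next_step t σ with
  | None => σ
  | Some (p, ev) =>
    let c := sim_cfg σ in
    let: (s', ms, oq) := a_step A p (cst c p) (input_of (answer_run σ) c p ev) in
    let pend0 := match ev with EvResp => false | _ => cpend c p end in
    {| sim_cfg := {| cst := fun q => if q == p then s' else cst c q;
                     cnq := fun q => if (q == p) && isSome oq then (cnq c q).+1 else cnq c q;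
                     cpend := fun q => if q == p then pend0 || isSome oq else cpend c q |};
       sim_log := fun s => if s == t then Some (p, (ms, oq)) else sim_log σ s;
       sim_delivered := fun s i =>
         if ev is EvMsg s0 i0 _ _ then ((s == s0) && (i == i0)) || sim_delivered σ s i
         else sim_delivered σ s i;
       sim_answer := fun c0 =>
         if sim_answer σ c0 is None then (if c0 == cnq c p then oq else None)
         else sim_answer σ c0 |}
  end.

Fixpoint sim t : sim_state :=
  if t is t'.+1 then sim_step t' (sim t')
  else {| sim_cfg := {| cst := fun p => a_init A p (V p); cnq := fun _ => 0;
                        cpend := fun _ => false |};
          sim_log := fun _ => None; sim_delivered := fun _ _ => false;
          sim_answer := fun _ => None |}.

(* Answers are never revised, so this is the eventual answer ([false] for a
   consultation that is never answered). *)
Definition oracle_answer c : bool := `[< exists t, sim_answer (sim t) c = Some true >].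

Definition fair_run : Run A :=
  {| sched := fun t => next_step t (sim t); resp := oracle_answer |}.

Lemma sim_answer_mono t t' c b :
  t <= t' -> sim_answer (sim t) c = Some b -> sim_answer (sim t') c = Some b.
Proof.
move=> le_tt'; elim: t' le_tt' => [|t' IH]; first by rewrite leqn0 => /eqP->.
rewrite leq_eqVlt => /orP[/eqP-> //|/IH IH' /IH' ans] /=.
rewrite /sim_step; case: next_step => [[p ev]|] //.
by case: a_step => [[s' ms] oq] /=; rewrite ans.
Qed.

Lemma sim_answer_consistent t t' c b b' :
  sim_answer (sim t) c = Some b -> sim_answer (sim t') c = Some b' -> b = b'.
Proof.
move=> ans ans'; case: (leqP t t') => [le_tt'|/ltnW le_t't].
  by move: (sim_answer_mono le_tt' ans); rewrite ans' => -[].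
by move: (sim_answer_mono le_t't ans'); rewrite ans => -[].
Qed.

Lemma oracle_answerE t c b : sim_answer (sim t) c = Some b -> oracle_answer c = b.
Proof.
case: b => ans; first by apply/asboolP; exists t.
by apply/negbTE/asboolPn => -[t' /(sim_answer_consistent ans)].
Qed.

Lemma next_step_pending t σ p ev : next_step t σ = Some (p, ev) ->
  cpend (sim_cfg σ) p = (if ev is EvResp then true else false).
Proof.
rewrite /next_step; case: awake => // -[<- <-]; rewrite /next_event.
case: (cpend _ _) => //; case: has => //=; rewrite /delivery.
by case: (sim_log _ _) => [[? [? ?]]|] //=; case: onth => [[]|].
Qed.

Lemma pending_answered t p : cpend (sim_cfg (sim t)) p ->
  exists b, sim_answer (sim t) (cnq (sim_cfg (sim t)) p).-1 = Some b.
Proof.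
elim: t p => [//|t IH] p /=; rewrite /sim_step.
case E: next_step => [[q ev]|]; last exact: IH.
case: a_step => [[s' ms] oq] /=.
have -> : match ev with EvResp => false | _ => cpend (sim_cfg (sim t)) q end = false.
  by move: (next_step_pending E); case: ev {E}.
case: eqP => [->|_]; last by move=> /IH [b ans]; exists b; rewrite ans.
case: oq => [b|] //= _; rewrite eqxx.
by case: (sim_answer _ _) => [b'|]; eexists.
Qed.

Lemma input_fair_run t p ev : next_step t (sim t) = Some (p, ev) ->
  input_of fair_run (sim_cfg (sim t)) p ev =
  input_of (answer_run (sim t)) (sim_cfg (sim t)) p ev.
Proof.
move=> E; have pend := next_step_pending E.
case: ev E pend => //= E pend; have [b ans] := pending_answered pend.
by rewrite ans (oracle_answerE ans).
Qed.

Lemma cfg_fair_run t : cfg V fair_run t = sim_cfg (sim t).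
Proof.
elim: t => [//|t IH] /=; rewrite IH /sim_step.
case E: (next_step t (sim t)) => [[p ev]|] //.
by rewrite (input_fair_run E); case: a_step => [[s' ms] oq].
Qed.


Lemma sim_log_future t s : t <= s -> sim_log (sim t) s = None.
Proof.
elim: t => [//|t IH] lt_ts /=; rewrite /sim_step.
case: next_step => [[p ev]|]; last exact: IH (ltnW lt_ts).
by case: a_step => [[s' ms] oq] /=; rewrite (gtn_eqF lt_ts) IH // ltnW.
Qed.

Lemma sim_log_stable t s : s < t -> sim_log (sim t) s = sim_log (sim s.+1) s.
Proof.
elim: t => [//|t IH]; rewrite ltnS leq_eqVlt => /orP[/eqP-> //|lt_st] /=.
rewrite /sim_step; case: next_step => [[p ev]|]; last exact: IH.
by case: a_step => [[s' ms] oq] /=; rewrite (ltn_eqF lt_st) IH.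
Qed.

Lemma out_fair_run t : out V fair_run t = sim_log (sim t.+1) t.
Proof.
rewrite /out /= cfg_fair_run /sim_step.
case E: (next_step t (sim t)) => [[p ev]|]; last by rewrite sim_log_future.
by rewrite (input_fair_run E); case: a_step => [[s' ms] oq] /=; rewrite eqxx.
Qed.

Lemma sim_logE t s : sim_log (sim t) s = if s < t then out V fair_run s else None.
Proof.
case: ifP => lt_st; first by rewrite out_fair_run sim_log_stable.
by rewrite sim_log_future // leqNgt lt_st.
Qed.

Lemma mem_msg_keys lg t key :
  (key \in msg_keys lg t) = (key.1 < t) && (key.2 < size (sent lg key.1)).
Proof.
case: key => s i /=; apply/flatten_mapP/andP => [[s0]|[lt_st lt_i]].
  rewrite mem_iota /= => lt_s0t /mapP [i0]; rewrite mem_iota /= => lt_i0 [-> ->].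
  by rewrite lt_s0t lt_i0.
by exists s; rewrite ?mem_iota //; apply/mapP; exists i; rewrite ?mem_iota.
Qed.

Lemma eq_msg_keys lg lg' t :
  (forall s, s < t -> lg s = lg' s) -> msg_keys lg t = msg_keys lg' t.
Proof.
move=> eq_lg; congr flatten; apply/eq_in_map => s.
by rewrite mem_iota /= => lt_st; rewrite /sent eq_lg.
Qed.

Lemma msg_keys_prefix lg t t' : t <= t' -> exists r, msg_keys lg t' = msg_keys lg t ++ r.
Proof. by move=> le_tt'; rewrite /msg_keys -(subnKC le_tt') iotaD map_cat flatten_cat; eexists. Qed.

Lemma msg_keys_sim t : msg_keys (sim_log (sim t)) t = msg_keys (out V fair_run) t.
Proof. by apply: eq_msg_keys => s lt_st; rewrite sim_logE lt_st. Qed.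

Lemma delivery_msg lg key p :
  msg_dest lg key = Some p -> exists q m, delivery lg key = EvMsg key.1 key.2 q m.
Proof.
rewrite /msg_dest /delivery /sent; case: (lg key.1) => [[q [ms oq]]|] /=; last by rewrite onth0n.
by case: onth => [[p0 m]|] // _; exists q, m.
Qed.

Lemma next_event_msg pend lg dl t p s i q m :
  next_event pend lg dl t p = EvMsg s i q m ->
  [/\ (s, i) \in msg_keys lg t, ~~ dl s i &
      exists ms oq, lg s = Some (q, (ms, oq)) /\ onth ms i = Some (p, m)].
Proof.
rewrite /next_event; case: ifP => // _; case: ifP => // has_p.
have := mem_nth (0, 0) (etrans (esym (has_find _ _)) has_p).
have := nth_find (0, 0) has_p.
case: nth => s0 i0; rewrite /deliverable /msg_dest /delivery /sent /=.
case E: (lg s0) => [[q0 [ms0 oq0]]|] //=; case Eo: onth => [[p0 m0]|] //=.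
move=> /andP[/eqP[<-] not_dl] key_in [<- <- <- <-].
by split=> //; exists ms0, oq0.
Qed.

Lemma rr_procE t (p : 'I_n) : rr_proc (t * n + p) = p.
Proof. by apply: val_inj; rewrite /= modnMDl modn_small. Qed.

Lemma steps_often p : (exists T, forall u, T <= u -> awake u p) ->
  forall t, exists t', t <= t' /\ steps t' p.
Proof.
move=> [T awake_p] t; exists (maxn t T * n + p).
by rewrite /steps rr_procE eqxx awake_p; [split=> //|]; nia.
Qed.

Lemma next_step_steps t σ p ev : next_step t σ = Some (p, ev) -> steps t p.
Proof. by rewrite /next_step /steps; case: ifP => // aw [<- _]; rewrite eqxx. Qed.

Lemma steps_next_step t σ p : steps t p -> exists ev, next_step t σ = Some (p, ev).
Proof. by case/andP => /eqP <- aw; rewrite /next_step aw; eexists. Qed.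

Lemma first_step p t : (exists t', t <= t' /\ steps t' p) ->
  exists t1, [/\ t <= t1, steps t1 p & forall u, t <= u < t1 -> ~~ steps u p].
Proof.
move=> [t' [le_tt' st]].
have ex_step : exists u, (t <= u) && steps u p by exists t'; rewrite le_tt' st.
case: (ex_minnP ex_step) => t1 /andP[le_t1 st1] min1; exists t1; split=> // u /andP[le_tu].
by apply: contraL => st_u; rewrite -leqNgt min1 // le_tu.
Qed.

Lemma sim_step_other t p : ~~ steps t p ->
  cnq (sim_cfg (sim t.+1)) p = cnq (sim_cfg (sim t)) p /\
  cpend (sim_cfg (sim t.+1)) p = cpend (sim_cfg (sim t)) p.
Proof.
move=> nstep /=; rewrite /sim_step; case E: next_step => [[q ev]|] //.
have ne_qp : q != p by apply: contraNneq nstep => <-; exact: next_step_steps E.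
by case: a_step => [[s' ms] oq] /=; rewrite eq_sym (negbTE ne_qp).
Qed.

Lemma sim_idle t0 t1 p : t0 <= t1 -> (forall u, t0 <= u < t1 -> ~~ steps u p) ->
  cnq (sim_cfg (sim t1)) p = cnq (sim_cfg (sim t0)) p /\
  cpend (sim_cfg (sim t1)) p = cpend (sim_cfg (sim t0)) p.
Proof.
elim: t1 => [|t1 IH]; first by rewrite leqn0 => /eqP->.
rewrite leq_eqVlt => /orP[/eqP-> //|le_01] quiet.
have /sim_step_other[-> ->] : ~~ steps t1 p by apply: quiet; rewrite ltnSn andbT -ltnS.
by apply: IH => // u /andP[le_0u lt_u1]; apply: quiet; rewrite le_0u ltnW.
Qed.

Lemma sim_step_self t p ev : next_step t (sim t) = Some (p, ev) ->
  exists ms oq, out V fair_run t = Some (p, (ms, oq)) /\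
    cnq (sim_cfg (sim t.+1)) p = cnq (sim_cfg (sim t)) p + isSome oq /\
    cpend (sim_cfg (sim t.+1)) p = isSome oq.
Proof.
move=> E; have pend := next_step_pending E.
rewrite out_fair_run /= /sim_step E; case: a_step => [[s' ms] oq] /=; rewrite !eqxx /=.
exists ms, oq; split=> //; split; first by case: oq => [?|] /=; rewrite ?addn1 ?addn0.
by case: ev E pend => [|s0 i0 q0 m0|] E pend /=; rewrite ?pend.
Qed.

Lemma out_next_step t p ms oq : out V fair_run t = Some (p, (ms, oq)) ->
  exists ev, next_step t (sim t) = Some (p, ev).
Proof.
rewrite out_fair_run /= /sim_step; case: next_step => [[q ev]|]; last by rewrite sim_log_future.
by case: a_step => [[s' ms'] oq'] /=; rewrite eqxx => -[<-]; exists ev.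
Qed.

Lemma sim_answer_queried t c b :
  sim_answer (sim t) c = Some b -> exists q, Queried V fair_run c q b.
Proof.
elim: t => [//|t IH] /=; rewrite /sim_step.
case E: next_step => [[p ev]|]; last exact: IH.
case step: a_step => [[s' ms] oq] /=.
case: (sim_answer (sim t) c) IH => [b' IH|_]; first exact: IH.
case: eqP => // -> query; exists p, t, ms; rewrite cfg_fair_run; split=> //.
by rewrite out_fair_run /= /sim_step E step /= eqxx -query.
Qed.

Lemma sim_delivered_mono t t' s i :
  t <= t' -> sim_delivered (sim t) s i -> sim_delivered (sim t') s i.
Proof.
move=> le_tt'; elim: t' le_tt' => [|t' IH]; first by rewrite leqn0 => /eqP->.
rewrite leq_eqVlt => /orP[/eqP-> //|/IH IH' /IH' dl] /=.
rewrite /sim_step; case: next_step => [[p ev]|] //.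
by case: a_step => [[s' ms] oq] /=; case: ev => //= *; rewrite dl orbT.
Qed.

Lemma sim_delivered_step t p s i q m :
  next_step t (sim t) = Some (p, EvMsg s i q m) -> sim_delivered (sim t.+1) s i.
Proof. by move=> E /=; rewrite /sim_step E; case: a_step => [[s' ms] oq] /=; rewrite !eqxx. Qed.

Lemma sim_delivered_src t s i : sim_delivered (sim t) s i ->
  exists t' p q m, t' < t /\ next_step t' (sim t') = Some (p, EvMsg s i q m).
Proof.
elim: t => [//|t IH] /=; rewrite /sim_step.
have IH' : sim_delivered (sim t) s i ->
    exists t' p q m, t' < t.+1 /\ next_step t' (sim t') = Some (p, EvMsg s i q m).
  by move=> /IH [t' [p [q [m [lt_t't E]]]]]; exists t', p, q, m; rewrite ltnW.
case E: next_step => [[p ev]|] //; case: a_step => [[s' ms] oq] /=.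
case: ev E => //= s0 i0 q0 m0 E; case/orP => // /andP[/eqP-> /eqP->].
by exists t, p, q0, m0.
Qed.

Lemma next_step_msg t p s i q m : next_step t (sim t) = Some (p, EvMsg s i q m) ->
  [/\ s < t, ~~ sim_delivered (sim t) s i &
      exists ms oq, out V fair_run s = Some (q, (ms, oq)) /\ onth ms i = Some (p, m)].
Proof.
rewrite /next_step; case: awake => // -[<- ev_msg].
have [key_in not_dl [ms [oq [log_s ms_i]]]] := next_event_msg ev_msg.
rewrite mem_msg_keys /= in key_in; case/andP: key_in => lt_st _.
by split=> //; exists ms, oq; rewrite -log_s sim_logE lt_st.
Qed.

Section Fairness.
Variable p : 'I_n.
Hypothesis p_steps : forall t, exists t', t <= t' /\ steps t' p.

Lemma query_answered c t ms b :
  out V fair_run t = Some (p, (ms, Some b)) -> cnq (cfg V fair_run t) p = c ->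
  exists t', GetsResp V fair_run c p t'.
Proof.
move=> out_t cnq_t; have [ev E] := out_next_step out_t.
have [ms' [oq [out_t' [cnq1 pend1]]]] := sim_step_self E.
move: out_t'; rewrite out_t => -[_ oqE]; rewrite -oqE /= in cnq1 pend1.
have [t1 [le_1 st1 quiet]] := first_step (p_steps t.+1).
have [cnq_eq pend_eq] := sim_idle le_1 quiet.
have [ev1 E1] := steps_next_step (sim t1) st1.
have := next_step_pending E1; rewrite pend_eq pend1.
case: ev1 E1 => // E1 _; exists t1; split=> //.
by rewrite cfg_fair_run cnq_eq cnq1 -cfg_fair_run cnq_t addn1.
Qed.

Definition awaits t (key : nat * nat) :=
  (msg_dest (out V fair_run) key == Some p) && ~~ sim_delivered (sim t) key.1 key.2.

Lemma awaits_mono t t' : t <= t' -> subpred (awaits t') (awaits t).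
Proof.
move=> le_tt' key /andP[dest not_dl]; rewrite /awaits dest /=.
by apply: contra not_dl; exact: sim_delivered_mono.
Qed.

Section Delivery.
Variables (s i : nat) (q : 'I_n) (ms : seq ('I_n * M)) (oq : option bool) (m : M).
Hypotheses (out_s : out V fair_run s = Some (q, (ms, oq))) (ms_i : onth ms i = Some (p, m))
  (never_received : ~ exists t, sched fair_run t = Some (p, EvMsg s i q m)).

Local Notation keys := (msg_keys (out V fair_run) s.+1).
Local Notation older := (take (index (s, i) keys).+1 keys).

(* Each step of [p] that does not wait for the oracle delivers one of the
   messages counted here, so [p] cannot stay unblocked forever. *)
Definition backlog t := count (awaits t) older.

Lemma never_delivered t : ~~ sim_delivered (sim t) s i.
Proof.
apply/negP => /sim_delivered_src [t' [p' [q' [m' [_ E]]]]].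
have [_ _ [ms' [oq' [out_s' ms'_i]]]] := next_step_msg E.
move: out_s' ms'_i; rewrite out_s => -[eq_q <- _]; rewrite ms_i => -[eq_p eq_m].
subst q' p' m'.
by apply: never_received; exists t'.
Qed.

Lemma awaits_msg t : awaits t (s, i).
Proof. by rewrite /awaits /msg_dest /sent /= out_s ms_i eqxx never_delivered. Qed.

Lemma msg_in_keys : (s, i) \in keys.
Proof. by rewrite mem_msg_keys /= ltnSn /sent out_s -onthTE ms_i. Qed.

Lemma msg_in_older : (s, i) \in older.
Proof. by rewrite in_take_leq ?ltnSn // index_mem msg_in_keys. Qed.

Lemma has_awaits_older t : has (awaits t) older.
Proof. by apply/hasP; exists (s, i); [exact: msg_in_older | exact: awaits_msg]. Qed.

Lemma backlog_gt0 t : 0 < backlog t.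
Proof. by rewrite -has_count has_awaits_older. Qed.

Lemma backlog_mono t t' : t <= t' -> backlog t' <= backlog t.
Proof. by move=> le_tt'; apply/sub_count/awaits_mono. Qed.

Lemma step_delivers_older t : s < t -> steps t p -> ~~ cpend (sim_cfg (sim t)) p ->
  exists2 key, key \in older & awaits t key && ~~ awaits t.+1 key.
Proof.
move=> lt_st /(steps_next_step (sim t)) [ev E] idle.
move: (E); rewrite /next_step; case: awake => // -[rr_p ev_def].
rewrite rr_p /next_event (negbTE idle) msg_keys_sim in ev_def.
set cur := msg_keys (out V fair_run) t in ev_def.
have same : {in cur, deliverable (sim_log (sim t)) (sim_delivered (sim t)) p =1 awaits t}.
  case=> s0 i0; rewrite mem_msg_keys /= => /andP[lt_s0t _].
  by rewrite /deliverable /awaits /msg_dest /sent /= sim_logE lt_s0t.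
rewrite (eq_in_has same) (eq_in_find same) in ev_def.
have [r cur_keys] := msg_keys_prefix (out V fair_run) lt_st.
have cur_older : take (index (s, i) keys).+1 cur = older.
  by rewrite /cur cur_keys takel_cat // index_mem msg_in_keys.
have has_cur : has (awaits t) cur.
  by apply/hasP; exists (s, i); [rewrite /cur cur_keys mem_cat msg_in_keys | exact: awaits_msg].
rewrite has_cur in ev_def.
have lt_f : find (awaits t) cur < (index (s, i) keys).+1.
  by rewrite -has_take // cur_older has_awaits_older.
set key := nth _ _ _ in ev_def.
have key_cur : key \in cur by rewrite mem_nth // -has_find.
have key_older : key \in older.
  rewrite -cur_older /key -(nth_take _ lt_f) mem_nth // size_take.
  by case: ifP => // _; rewrite -has_find.
have aw_key : awaits t key by exact: nth_find.
exists key => //; rewrite aw_key /=.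
have /andP[/eqP/delivery_msg[q' [m' deliv]] _] := etrans (same key key_cur) aw_key.
rewrite deliv in ev_def; rewrite -ev_def in E.
by rewrite /awaits (sim_delivered_step E) andbF.
Qed.

Lemma backlog_step t : s < t -> steps t p -> ~~ cpend (sim_cfg (sim t)) p ->
  backlog t.+1 < backlog t.
Proof.
move=> lt_st st idle; have [key key_older /andP[aw aw']] := step_delivers_older lt_st st idle.
exact: count_lt_sub (awaits_mono (leqnSn t)) key_older aw aw'.
Qed.

Lemma waits_forever : exists t0, forall t, t0 <= t -> cpend (sim_cfg (sim t)) p.
Proof.
apply: contrapT => no_wait.
have idle t : exists2 t0, t <= t0 & ~~ cpend (sim_cfg (sim t0)) p.
  apply: contrapT => busy; apply: no_wait; exists t => u le_tu.
  by apply: contrapT => /negP idle_u; apply: busy; exists u.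
suff descent : forall K t, s < t -> backlog t <= K -> False.
  exact: descent _ s.+1 (ltnSn s) (leqnn _).
elim=> [|K IH] t lt_st le_K; first by have := backlog_gt0 t; rewrite lt0n -leqn0 le_K.
have [t0 le_t0 idle0] := idle t.
have [t1 [le_01 st1 quiet]] := first_step (p_steps t0).
have [_ pend_eq] := sim_idle le_01 quiet; rewrite -pend_eq in idle0.
have le_t1 := leq_trans le_t0 le_01; have lt_st1 := leq_trans lt_st le_t1.
apply: (IH t1.+1 (ltnW lt_st1)).
by have := backlog_step lt_st1 st1 idle0; have := backlog_mono le_t1; lia.
Qed.

End Delivery.

Lemma reliable_channel s q ms oq i m :
  out V fair_run s = Some (q, (ms, oq)) -> onth ms i = Some (p, m) ->
  (exists t, sched fair_run t = Some (p, EvMsg s i q m)) \/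
  (exists t0, forall t, t0 <= t -> cpend (cfg V fair_run t) p).
Proof.
move=> out_s ms_i; have [|never] := EM (exists t, sched fair_run t = Some (p, EvMsg s i q m)).
  by left.
have [t0 waits] := waits_forever out_s ms_i never.
by right; exists t0 => t le_t; rewrite cfg_fair_run waits.
Qed.

End Fairness.

Section Admissibility.
Variable F : failure_pattern n.
Hypothesis awake_alive : forall t, awake t (rr_proc t) -> rr_proc t \notin F t.
Hypothesis correct_steps : forall p, correct F p -> forall t, exists t', t <= t' /\ steps t' p.

Theorem fair_run_admissible fO : Admissible V fair_run F (kTAg n n) fO.
Proof.
split; [|split; [|split; [|split; [|split; [|split; [|split]]]]]].
- by move=> t p ev /=; rewrite /next_step; case: ifP => // aw [<- _]; exact: awake_alive.
- by move=> t p ev /= E; rewrite cfg_fair_run; exact: next_step_pending E.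
- by move=> t p s i q m /= /next_step_msg[lt_st _ sent_m]; split.
- move=> t t' p p' s i q q' m m' /= E E'.
  have [_ not_dl _] := next_step_msg E; have [_ not_dl' _] := next_step_msg E'.
  case: (ltngtP t t') => // lt_tt'; exfalso.
    by move: not_dl'; rewrite (sim_delivered_mono lt_tt' (sim_delivered_step E)).
  by move: not_dl; rewrite (sim_delivered_mono lt_tt' (sim_delivered_step E')).
- move=> c [p [t [/= E cnq_t]]] W extends.
  have [b ans] := pending_answered (next_step_pending E).
  rewrite cfg_fair_run in cnq_t; rewrite cnq_t /= in ans.
  have [q queried] := sim_answer_queried ans.
  by rewrite /= (oracle_answerE ans) -(extends q b queried); exact: cons_valid_input.
- move=> p p_ok t _; have [t' [le_tt' st]] := correct_steps p_ok t.
  by have [ev E] := steps_next_step (sim t') st; exists t', ev.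
- move=> s q ms oq i p m out_s ms_i /correct_steps p_steps.
  exact: reliable_channel out_s ms_i.
- move=> c _ p /correct_steps p_steps [b [t [ms [out_t cnq_t]]]].
  exact: (query_answered p_steps out_t cnq_t).
Qed.

End Admissibility.

End SilencingScheduler.

Definition sim_agree n (A : Algo n) (S : {set 'I_n}) (σ1 σ2 : sim_state A) :=
  [/\ sim_log σ1 = sim_log σ2, sim_delivered σ1 = sim_delivered σ2,
      sim_answer σ1 = sim_answer σ2, cnq (sim_cfg σ1) = cnq (sim_cfg σ2) &
      cpend (sim_cfg σ1) = cpend (sim_cfg σ2)] /\
  forall p, p \notin S -> cst (sim_cfg σ1) p = cst (sim_cfg σ2) p.

Lemma sim_step_agree n (A : Algo n) (S : {set 'I_n}) T (n_gt0 : 0 < n) t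
    (σ1 σ2 : sim_state A) :
  t < T -> sim_agree S σ1 σ2 ->
  sim_agree S (sim_step S None n_gt0 t σ1) (sim_step S (Some T) n_gt0 t σ2).
Proof.
move=> lt_tT [[log dl ans cnq_eq pend_eq] cst_eq].
have same_next : next_step S None n_gt0 t σ1 = next_step S (Some T) n_gt0 t σ2.
  by rewrite /next_step /awake (leqNgt T t) lt_tT !orbF pend_eq log dl.
rewrite /sim_step -same_next.
case E: next_step => [[p ev]|]; last by split.
have p_out : p \notin S by move: E; rewrite /next_step /awake orbF; case: ifP => // ? [<- _].
have same_input :
    input_of (answer_run σ1) (sim_cfg σ1) p ev = input_of (answer_run σ2) (sim_cfg σ2) p ev.
  by case: ev {E} => //=; rewrite ans cnq_eq.
rewrite (cst_eq p p_out) same_input; case: a_step => [[s' ms] oq].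
rewrite cnq_eq pend_eq log dl ans; split=> // q q_out /=.
by case: eqP => // _; exact: cst_eq.
Qed.

Lemma sim_agree_upto n (A : Algo n) (S : {set 'I_n}) T (n_gt0 : 0 < n)
    (V0 V1 : 'I_n -> bool) :
  (forall p, p \notin S -> V0 p = V1 p) ->
  forall t, t <= T -> sim_agree S (sim A V0 S None n_gt0 t) (sim A V1 S (Some T) n_gt0 t).
Proof.
move=> eqV; elim=> [|t IH] le_tT; first by split=> // p /eqV /= ->.
exact: sim_step_agree le_tT (IH (ltnW le_tT)).
Qed.

Lemma fair_run_dec_agree n (A : Algo n) (S : {set 'I_n}) T (n_gt0 : 0 < n)
    (V0 V1 : 'I_n -> bool) p :
  (forall q, q \notin S -> V0 q = V1 q) -> p \notin S ->
  dec_at V0 (fair_run A V0 S None n_gt0) T p = dec_at V1 (fair_run A V1 S (Some T) n_gt0) T p.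
Proof.
move=> eqV p_out; rewrite /dec_at !cfg_fair_run.
by have [_ ->] := sim_agree_upto A n_gt0 eqV (leqnn T).
Qed.

Lemma faulty_const n (X : {set 'I_n}) : faulty (fun _ => X) = X.
Proof. by apply/setP => p; rewrite inE; apply/asboolP/idP => [[]|p_X] //; exists 0. Qed.

Lemma crashed_run_admissible n (A : Algo n) V (S : {set 'I_n}) (n_gt0 : 0 < n) fO :
  Admissible V (fair_run A V S None n_gt0) (fun _ => S) (kTAg n n) fO.
Proof.
apply: fair_run_admissible => [t|p]; first by rewrite /awake orbF.
rewrite /correct faulty_const => p_out; apply: steps_often.
by exists 0 => u _; rewrite /awake p_out.
Qed.

Lemma released_run_admissible n (A : Algo n) V (S : {set 'I_n}) T (n_gt0 : 0 < n) fO :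
  Admissible V (fair_run A V S (Some T) n_gt0) (fun _ => set0) (kTAg n n) fO.
Proof.
apply: fair_run_admissible => [t _|p _]; first by rewrite inE.
by apply: steps_often; exists T => u le_Tu; rewrite /awake le_Tu orbT.
Qed.

Lemma card_ltn_ord n k : k <= n -> #|[set p : 'I_n | p < k]| = k.
Proof.
move=> le_kn; have -> : [set p : 'I_n | p < k] = widen_ord le_kn @: [set: 'I_k].
  apply/setP => p; rewrite inE; apply/idP/imsetP => [lt_pk|[j _ ->]]; last exact: (ltn_ord j).
  by exists (Ordinal lt_pk) => //; apply: val_inj.
by rewrite card_imset ?cardsT ?card_ord // => a b /(congr1 val) /= /val_inj.
Qed.

Lemma kTAg_not_Creducible_Cons n f k g :
  0 < k -> k <= f -> k < n -> ~ Creducible (kTAg_task n f k) (ConsT n g).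
Proof.
move=> k_gt0 le_kf lt_kn [A solves_A].
have n_gt0 : 0 < n by exact: leq_ltn_trans lt_kn.
pose S := [set p : 'I_n | p < k].
have card_S : #|S| = k by exact/card_ltn_ord/ltnW.
pose p0 : 'I_n := Ordinal lt_kn.
have p0_out : p0 \notin S by rewrite inE ltnn.
pose V0 (p : 'I_n) := p \notin S.
have bound0 : #|faulty (fun _ => S)| <= f by rewrite faulty_const card_S.
have [live0 [_ [_ valid0]]] := solves_A (fun _ => S) (fun _ _ _ => subxx S) bound0 V0 _
  (crashed_run_admissible A V0 S n_gt0 g).
have p0_correct : correct (fun _ => S) p0 by rewrite /correct faulty_const.
have [t [d dec0]] := live0 p0 p0_correct.
have d_false : d = false.
  have := valid0 _ _ _ dec0; rewrite /= /kTAg.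
  have -> : [set p | ~~ V0 p] = S by apply/setP => p; rewrite inE negbK.
  by rewrite card_S leqnn.
pose V1 (p : 'I_n) := true.
have bound1 : #|faulty (fun _ => set0 : {set 'I_n})| <= f by rewrite faulty_const cards0.
have [_ [_ [_ valid1]]] := solves_A (fun _ => set0) (fun _ _ _ => subxx set0) bound1 V1 _
  (released_run_admissible A V1 S t n_gt0 g).
have eqV : forall p, p \notin S -> V0 p = V1 p by move=> p; rewrite /V0 => ->.
have := valid1 _ _ _ (etrans (esym (fair_run_dec_agree A t n_gt0 eqV p0_out)) dec0).
rewrite /= /kTAg faulty_const cards0 leqNgt k_gt0 d_false /=.
by have -> : [forall p, V1 p] by apply/forallP.
Qed.

Theorem mainTheorem9 :
  forall n f k : nat, 1 <= k -> k <= f -> f <= n - 1 ->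
    ~ Creducible (kTAg_task n f k) (ConsT n (n - 1)) /\
    ~ Creducible (kTAg_task n f k) (ConsT n f).
Proof.
move=> n f k k_gt0 le_kf le_fn.
have lt_kn : k < n by lia.
by split; apply: kTAg_not_Creducible_Cons.
Qed.
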